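(* Let $\alpha\ge1$, $\beta,\gamma\ge0$ be integers and let $(\mathbf a,\mathbf b)$ be a binary GCP of length $N=2^\alpha10^\beta26^\gamma$ obtained by the recursive Turyn construction $(\mathbf e_0,\mathbf f_0)=K_2$, $(\mathbf e_i,\mathbf f_i)=\mathrm{Turyn}(\mathcal A_i,(\mathbf e_{i-1},\mathbf f_{i-1}))$ with each $\mathcal A_i\in\{K_2,K_{10},K_{26}\}$ (so that in total $K_2$ is used $\alpha$ times, $K_{10}$ $\beta$ times and $K_{26}$ $\gamma$ times). Let $(\mathbf c,\mathbf d)=(\overleftarrow{\mathbf b},-\overleftarrow{\mathbf a})$ be its complementary mate, let $\mathbf e=(\mathbf a\|\mathbf c)$ and $\mathbf f=(\mathbf b\|\mathbf d)$ (length $2N$), and for $x_0,y_0,x_1,y_1\in\mathbb U_q$ let $\mathbf g=(x_0,e_0,\dots,e_{2N-1},y_0)$ and $\mathbf h=(x_1,f_0,\dots,f_{2N-1},y_1)$. If $$x_0-\overline{y_1}=0,\quad x_1+\overline{y_0}=0,\quad x_0=x_1,\quad \overline{y_0}=-\overline{y_1},$$ then $(\mathbf g,\mathbf h)$ is a $(2N+2,\,N/2+1)$-CZCP.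
   Context: $q\ge2$ is an integer and $\mathbb U_q=\{e^{2\pi\sqrt{-1}t/q}:0\le t<q\}$. $\overleftarrow{\mathbf a}$ denotes the reversal of $\mathbf a$; $\|$ denotes concatenation. A binary GCP (Golay complementary pair) of length $N$ is a pair of $\pm1$ sequences with $\rho_{\mathbf a}(\tau)+\rho_{\mathbf b}(\tau)=0$ for all $\tau\neq0$. Kernels (written with $+=1$, $-=-1$; first row $\mathbf a$, second row $\mathbf b$): $K_2=(++,\;+-)$; $K_{10}=(++-+-+--++,\;++-+++++--)$; $K_{26}=(++++-++--+-+-+--+-+++--+++,\;++++-++--+-+++++-+---++---)$. Turyn's method: for binary GCPs $\mathcal A=(\mathbf a,\mathbf b)$ of length $N$ and $\mathcal B=(\mathbf c,\mathbf d)$ of length $M$, $\mathrm{Turyn}(\mathcal A,\mathcal B)=(\mathbf e,\mathbf f)$ of length $MN$ with $\mathbf e=\mathbf c\otimes\frac{\mathbf a+\mathbf b}2-\overleftarrow{\mathbf d}\otimes\frac{\mathbf b-\mathbf a}2$, $\mathbf f=\mathbf d\otimes\frac{\mathbf a+\mathbf b}2+\overleftarrow{\mathbf c}\otimes\frac{\mathbf b-\mathbf a}2$, where $\mathbf u\otimes\mathbf v=(u_0\mathbf v,u_1\mathbf v,\dots)$ is the Kronecker product. Aperiodic correlation: for complex sequences $\mathbf a,\mathbf b$ of length $N$, $\rho_{\mathbf a,\mathbf b}(\tau)=\sum_{k=0}^{N-1-\tau}a_k\overline{b_{k+\tau}}$ for $0\le\tau\le N-1$, $\rho_{\mathbf a,\mathbf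 b}(\tau)=\sum_{k=0}^{N-1+\tau}a_{k-\tau}\overline{b_k}$ for $-(N-1)\le\tau\le-1$, and $0$ for $|\tau|\ge N$; $\rho_{\mathbf a}=\rho_{\mathbf a,\mathbf a}$. CZCP: with $\mathcal T_1=\{1,\dots,Z\}$, $\mathcal T_2=\{N-Z,\dots,N-1\}$, a pair $(\mathbf a,\mathbf b)$ of length-$N$ sequences is an $(N,Z)$-CZCP if $\rho_{\mathbf a}(\tau)+\rho_{\mathbf b}(\tau)=0$ for all $|\tau|\in\mathcal T_1\cup\mathcal T_2$ and $\rho_{\mathbf a,\mathbf b}(\tau)+\rho_{\mathbf b,\mathbf a}(\tau)=0$ for all $|\tau|\in\mathcal T_2$. *)

From HB Require Import structures.
From mathcomp Require Import all_boot all_order all_algebra all_field.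
Set Implicit Arguments. Unset Strict Implicit. Unset Printing Implicit Defensive.
Import Order.TTheory GRing.Theory Num.Theory.
Local Open Scope ring_scope.

(* U_q : the q-th roots of unity {exp(2 pi i t/q) : 0 <= t < q}. *)
Definition in_Uq (q : nat) (z : algC) : Prop := z ^+ q = 1.

Definition rho (a b : seq algC) (tau : int) : algC :=
  match tau with
  | Posz n => \sum_(k < size a - n) a`_k * (b`_(k + n))^*
  | Negz m => \sum_(k < size a - m.+1) a`_(k + m.+1) * (b`_k)^*
  end.

Definition acorr (a : seq algC) (tau : int) : algC := rho a a tau.

Definition CZCP (N Z : nat) (a b : seq algC) : Prop :=
  [/\ size a = N, size b = N,
   (forall tau : int,
      ((1 <= `|tau| <= Z)%N || (N - Z <= `|tau| <= N - 1)%N) ->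
      acorr a tau + acorr b tau = 0) &
   (forall tau : int, (N - Z <= `|tau| <= N - 1)%N ->
      rho a b tau + rho b a tau = 0)].

Definition pm (s : seq bool) : seq algC := [seq (if x then 1 else -1) | x <- s].

Definition K2 : seq algC * seq algC :=
  (pm [:: true; true], pm [:: true; false]).
Definition K10 : seq algC * seq algC :=
  (pm [:: true; true; false; true; false; true; false; false; true; true],
   pm [:: true; true; false; true; true; true; true; true; false; false]).
Definition K26 : seq algC * seq algC :=
  (pm [:: true; true; true; true; false; true; true; false; false; true; false; true; false;
          true; false; false; true; false; true; true; true; false; false; true; true; true],
   pm [:: true; true; true; true; false; true; true; false; false; true; false; true; true;
          true; true; true; false; true; false; false; false; true; true; false; false; false]).

Inductive kernel := Ker2 | Ker10 | Ker26.
Definition kernel_eqb (x y : kernel) : bool :=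
  match x, y with Ker2, Ker2 | Ker10, Ker10 | Ker26, Ker26 => true | _, _ => false end.

Definition kernel_pair (k : kernel) : seq algC * seq algC :=
  match k with Ker2 => K2 | Ker10 => K10 | Ker26 => K26 end.

Definition kron (u v : seq algC) : seq algC := flatten [seq [seq x * y | y <- v] | x <- u].

Definition seqadd (u v : seq algC) : seq algC := [seq p.1 + p.2 | p <- zip u v].
Definition seqscale (c : algC) (u : seq algC) : seq algC := [seq c * x | x <- u].

Definition turyn (A B : seq algC * seq algC) : seq algC * seq algC :=
  let: (a, b) := A in let: (c, d) := B in
  let s := seqscale (2^-1) (seqadd a b) in
  let t := seqscale (2^-1) (seqadd b (seqscale (-1) a)) in
  (seqadd (kron c s) (seqscale (-1) (kron (rev d) t)),
   seqadd (kron d s) (kron (rev c) t)).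

Definition turyn_rec (ks : seq kernel) : seq algC * seq algC :=
  foldl (fun P k => turyn (kernel_pair k) P) K2 ks.

From HB Require Import structures.
From mathcomp Require Import all_boot all_order all_algebra all_field.
From mathcomp Require Import ring zify.
Import Order.TTheory GRing.Theory Num.Theory.
Local Open Scope ring_scope.

Set Implicit Arguments. Unset Strict Implicit. Unset Printing Implicit Defensive.

(* Every pair (a, b) produced by Turyn's recursion from K2 is a real Golay
   pair of length 2m of the form a = u ++ v, b = u ++ -v with |u| = |v| = m:
   Turyn's construction preserves the Golay property, and block by block the
   Kronecker structure carries this shape from the outer pair (c, d) to the
   result.  Encode a sequence s by P_s = Poly s and its conjugate reversal by
   Q_s; then rho_{g,h}(tau) is the coefficient of degree |g| - 1 - tau of
   P_g Q_h.  With x0 = x1 = x, y1 = x^* and y0 = -x^*, the sums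
   P_g Q_g + P_h Q_h and P_g Q_h + P_h Q_g are explicit polynomials in
   P_a, P_b, their reversals, the Golay sum of (a, b) (a single monomial of
   degree 4m + 1 after shifting) and the difference P_b - P_a = -2 X^m P_v.
   The latter has no coefficient below degree m or from degree 2m on, which
   makes all correlations in the two zero zones of the (4m + 2, m + 1)-CZCP
   vanish. *)

Lemma size_seqscale c (u : seq algC) : size (seqscale c u) = size u.
Proof. exact: size_map. Qed.

Lemma size_seqadd (u v : seq algC) : size (seqadd u v) = minn (size u) (size v).
Proof. by rewrite size_map size_zip. Qed.

Lemma kron_cons x (u v : seq algC) : kron (x :: u) v = seqscale x v ++ kron u v.
Proof. by []. Qed.

Lemma size_kron (u v : seq algC) : size (kron u v) = (size u * size v)%N.
Proof. by elim: u => //= x u IH; rewrite kron_cons size_cat size_seqscale IH mulSn. Qed.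

Lemma nth_seqadd (u v : seq algC) i : size u = size v ->
  (seqadd u v)`_i = u`_i + v`_i.
Proof.
elim: u v i => [|x u IH] [|y v] //= i; first by rewrite nth_nil addr0.
by move=> [] /IH uvE; case: i.
Qed.

Lemma nth_seqscale c (u : seq algC) i : (seqscale c u)`_i = c * u`_i.
Proof.
have [ltiu|leui] := ltnP i (size u); first by rewrite (nth_map 0).
by rewrite !nth_default ?size_seqscale ?mulr0.
Qed.

Lemma nth_kron (u v : seq algC) j : (0 < size v)%N ->
  (kron u v)`_j = u`_(j %/ size v) * v`_(j %% size v).
Proof.
move=> v_gt0; elim: u j => [|x u IH] j; first by rewrite !nth_nil mul0r.
rewrite kron_cons nth_cat size_seqscale; case: ltnP => [ltjv|levj].
  by rewrite nth_seqscale divn_small // modn_small.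
by rewrite IH -(subnKC levj) divnDl // divnn v_gt0 modnDl add1n addKn.
Qed.

Lemma rev_seqadd (u v : seq algC) : size u = size v ->
  rev (seqadd u v) = seqadd (rev u) (rev v).
Proof. by move=> uvE; rewrite /seqadd -map_rev rev_zip. Qed.

Lemma rev_seqscale c (u : seq algC) : rev (seqscale c u) = seqscale c (rev u).
Proof. by rewrite /seqscale map_rev. Qed.

Lemma rev_kron (u v : seq algC) : rev (kron u v) = kron (rev u) (rev v).
Proof.
rewrite /kron rev_flatten -map_comp -map_rev; congr flatten.
by apply: eq_map => x /=; rewrite -map_rev.
Qed.

Lemma Poly_cat (s1 s2 : seq algC) :
  Poly (s1 ++ s2) = Poly s1 + 'X^(size s1) * Poly s2.
Proof.
elim: s1 => [|x s IH] /=; first by rewrite mul1r add0r.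
by rewrite !cons_poly_def IH exprS; ring.
Qed.

Lemma Poly_seqscale c (s : seq algC) : Poly (seqscale c s) = c%:P * Poly s.
Proof.
elim: s => [|x s IH] /=; first by rewrite mulr0.
by rewrite !cons_poly_def IH polyCM; ring.
Qed.

Lemma Poly_opp (s : seq algC) : Poly [seq - x | x <- s] = - Poly s.
Proof.
elim: s => [|x s IH] /=; first by rewrite oppr0.
by rewrite !cons_poly_def IH polyCN; ring.
Qed.

Lemma Poly_seqadd (u v : seq algC) : size u = size v ->
  Poly (seqadd u v) = Poly u + Poly v.
Proof.
elim: u v => [|x u IH] [|y v] //=; first by rewrite addr0.
move=> [] /IH; rewrite /seqadd /= => ->.
by rewrite !cons_poly_def polyCD; ring.
Qed.

Lemma Poly_kron (u v : seq algC) :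
  Poly (kron u v) = (Poly u \Po 'X^(size v)) * Poly v.
Proof.
elim: u => [|x u IH]; first by rewrite comp_poly0 mul0r.
rewrite kron_cons Poly_cat Poly_seqscale IH size_seqscale /= cons_poly_def.
by rewrite comp_poly_MXaddC; ring.
Qed.

Definition real_seq (s : seq algC) := forall i, (s`_i)^* = s`_i.

Lemma real_seq_map_conj s : real_seq s -> map Num.conj_op s = s.
Proof.
move=> rs; apply: (@eq_from_nth _ 0); rewrite ?size_map // => i lt_is.
by rewrite (nth_map 0) // rs.
Qed.

Lemma real_seq_rev s : real_seq s -> real_seq (rev s).
Proof.
move=> rs i; have [lt_is|le_si] := ltnP i (size s); first by rewrite nth_rev // rs.
by rewrite nth_default ?size_rev // rmorph0.
Qed.

Lemma real_seqadd u v : size u = size v -> real_seq u -> real_seq v ->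
  real_seq (seqadd u v).
Proof. by move=> uvE ru rv i; rewrite nth_seqadd // -[in RHS]ru -[in RHS]rv rmorphD. Qed.

Lemma real_seqscale c u : c^* = c -> real_seq u -> real_seq (seqscale c u).
Proof. by move=> rc ru i; rewrite nth_seqscale -[in RHS]rc -[in RHS]ru rmorphM. Qed.

Lemma real_kron u v : (0 < size v)%N -> real_seq u -> real_seq v ->
  real_seq (kron u v).
Proof. by move=> v_gt0 ru rv i; rewrite nth_kron // -[in RHS]ru -[in RHS]rv rmorphM. Qed.

(* For a real sequence a, the coefficient of degree n.-1 - tau of
   Poly a * Poly (rev a) is rho_a(tau). *)
Definition golay (a b : seq algC) (n : nat) :=
  [/\ size a = n, size b = n, real_seq a, real_seq b &
      Poly a * Poly (rev a) + Poly b * Poly (rev b) = (2 * n)%:R * 'X^(n.-1)].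

Definition turyn_sum (a b : seq algC) := seqscale 2^-1 (seqadd a b).
Definition turyn_diff (a b : seq algC) := seqscale 2^-1 (seqadd b (seqscale (-1) a)).

Lemma turynE a b c d : turyn (a, b) (c, d) =
  (seqadd (kron c (turyn_sum a b)) (seqscale (-1) (kron (rev d) (turyn_diff a b))),
   seqadd (kron d (turyn_sum a b)) (kron (rev c) (turyn_diff a b))).
Proof. by []. Qed.

Section TurynStep.

Variables (a b c d : seq algC) (n M : nat).
Hypotheses (size_a : size a = n) (size_b : size b = n).
Hypotheses (size_c : size c = M) (size_d : size d = M).

Lemma size_turyn_sum : size (turyn_sum a b) = n.
Proof. by rewrite size_seqscale size_seqadd size_a size_b minnn. Qed.

Lemma size_turyn_diff : size (turyn_diff a b) = n.
Proof. by rewrite !size_seqscale size_seqadd size_seqscale size_a size_b minnn. Qed.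

Lemma Poly_turyn_sum : Poly (turyn_sum a b) = 2^-1%:P * (Poly a + Poly b).
Proof. by rewrite Poly_seqscale Poly_seqadd ?size_a ?size_b. Qed.

Lemma Poly_turyn_diff : Poly (turyn_diff a b) = 2^-1%:P * (Poly b - Poly a).
Proof.
rewrite Poly_seqscale Poly_seqadd ?size_seqscale ?size_a ?size_b //.
by rewrite Poly_seqscale polyCN polyC1 mulN1r.
Qed.

Lemma rev_turyn_sum : rev (turyn_sum a b) = turyn_sum (rev a) (rev b).
Proof. by rewrite rev_seqscale rev_seqadd ?size_a ?size_b. Qed.

Lemma rev_turyn_diff : rev (turyn_diff a b) = turyn_diff (rev a) (rev b).
Proof.
by rewrite rev_seqscale rev_seqadd ?size_seqscale ?size_a ?size_b // rev_seqscale.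
Qed.

Let size_kron_sum u : size (kron u (turyn_sum a b)) = (size u * n)%N.
Proof. by rewrite size_kron size_turyn_sum. Qed.

Let size_kron_diff u : size (kron u (turyn_diff a b)) = (size u * n)%N.
Proof. by rewrite size_kron size_turyn_diff. Qed.

Lemma size_turyn :
  size (turyn (a, b) (c, d)).1 = (M * n)%N /\ size (turyn (a, b) (c, d)).2 = (M * n)%N.
Proof.
rewrite turynE !size_seqadd size_seqscale !size_kron_sum !size_kron_diff.
by rewrite !size_rev size_c size_d !minnn.
Qed.

Lemma rev_turyn :
  rev (turyn (a, b) (c, d)).1 = (turyn (rev a, rev b) (rev c, rev d)).1 /\
  rev (turyn (a, b) (c, d)).2 = (turyn (rev a, rev b) (rev c, rev d)).2.
Proof.
rewrite !turynE /= !rev_seqadd ?size_seqscale ?size_kron_sum ?size_kron_diff;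
  rewrite ?size_rev ?size_c ?size_d //.
by rewrite rev_seqscale !rev_kron rev_turyn_sum rev_turyn_diff !revK.
Qed.

Lemma Poly_turyn :
  Poly (turyn (a, b) (c, d)).1 = (Poly c \Po 'X^n) * Poly (turyn_sum a b)
                               - (Poly (rev d) \Po 'X^n) * Poly (turyn_diff a b) /\
  Poly (turyn (a, b) (c, d)).2 = (Poly d \Po 'X^n) * Poly (turyn_sum a b)
                               + (Poly (rev c) \Po 'X^n) * Poly (turyn_diff a b).
Proof.
rewrite turynE /= !Poly_seqadd ?size_seqscale ?size_kron_sum ?size_kron_diff;
  rewrite ?size_rev ?size_c ?size_d //.
rewrite Poly_seqscale !Poly_kron size_turyn_sum size_turyn_diff.
by rewrite polyCN polyC1 mulN1r.
Qed.

Lemma nth_turyn i : (0 < n)%N -> (i < M * n)%N ->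
  ((turyn (a, b) (c, d)).1)`_i = c`_(i %/ n) * (turyn_sum a b)`_(i %% n)
                   - d`_(M - (i %/ n).+1) * (turyn_diff a b)`_(i %% n) /\
  ((turyn (a, b) (c, d)).2)`_i = d`_(i %/ n) * (turyn_sum a b)`_(i %% n)
                   + c`_(M - (i %/ n).+1) * (turyn_diff a b)`_(i %% n).
Proof.
move=> n_gt0 lt_i_Mn; have lt_in_M : (i %/ n < M)%N by rewrite ltn_divLR.
rewrite turynE /= !nth_seqadd ?size_seqscale ?size_kron_sum ?size_kron_diff;
  rewrite ?size_rev ?size_c ?size_d // nth_seqscale.
rewrite !nth_kron ?size_turyn_sum ?size_turyn_diff // !nth_rev ?size_c ?size_d //.
by split; ring.
Qed.

Lemma real_turyn : (0 < n)%N -> real_seq a -> real_seq b -> real_seq c -> real_seq d ->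
  real_seq (turyn (a, b) (c, d)).1 /\ real_seq (turyn (a, b) (c, d)).2.
Proof.
move=> n_gt0 ra rb rc rd.
have half_real : (2^-1 : algC)^* = 2^-1 by rewrite fmorphV rmorph_nat.
have m1_real : (-1 : algC)^* = -1 by rewrite rmorphN1.
have rs : real_seq (turyn_sum a b).
  by apply: real_seqscale => //; apply: real_seqadd; rewrite ?size_a ?size_b.
have rt : real_seq (turyn_diff a b).
  apply: real_seqscale => //; apply: real_seqadd; rewrite ?size_seqscale ?size_a ?size_b //.
  exact: real_seqscale.
have s_gt0 : (0 < size (turyn_sum a b))%N by rewrite size_turyn_sum.
have t_gt0 : (0 < size (turyn_diff a b))%N by rewrite size_turyn_diff.
rewrite turynE; split.
- apply: real_seqadd (real_kron s_gt0 rc rs)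
    (real_seqscale m1_real (real_kron t_gt0 (real_seq_rev rd) rt)).
  by rewrite size_seqscale size_kron_sum size_kron_diff size_rev size_c size_d.
- apply: real_seqadd (real_kron s_gt0 rd rs) (real_kron t_gt0 (real_seq_rev rc) rt).
  by rewrite size_kron_sum size_kron_diff size_rev size_c size_d.
Qed.

End TurynStep.

Lemma golay_turyn a b c d n M : (0 < n)%N -> (0 < M)%N ->
  golay a b n -> golay c d M ->
  golay (turyn (a, b) (c, d)).1 (turyn (a, b) (c, d)).2 (M * n).
Proof.
move=> n_gt0 M_gt0 [sa sb ra rb gab] [sc sd rc rd gcd].
have [se sf] := size_turyn sa sb sc sd.
have [re_real rf_real] := real_turyn sa sb sc sd n_gt0 ra rb rc rd.
split=> //.
have [re rf] := rev_turyn sa sb sc sd.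
have [Pe Pf] := Poly_turyn sa sb sc sd.
have sra : size (rev a) = n by rewrite size_rev.
have srb : size (rev b) = n by rewrite size_rev.
have [Per Pfr] := Poly_turyn sra srb (etrans (size_rev c) sc) (etrans (size_rev d) sd).
rewrite re rf Pe Pf Per Pfr !revK (Poly_turyn_sum sa sb) (Poly_turyn_diff sa sb).
rewrite (Poly_turyn_sum sra srb) (Poly_turyn_diff sra srb).
(* With s = (A + B)/2 and t = (B - A)/2 the mixed terms cancel and
   s s' + t t' = (A A' + B B')/2, where ' denotes reversal. *)
transitivity (((Poly c * Poly (rev c) + Poly d * Poly (rev d)) \Po 'X^n) *
   (2^-1%:P * 2^-1%:P * 2%:R * (Poly a * Poly (rev a) + Poly b * Poly (rev b)))).
  by rewrite comp_polyD !comp_polyM; ring.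
rewrite gcd gab comp_polyM -polyC_natr comp_polyC comp_Xn_poly -exprM.
have half2 : (2^-1%:P * 2%:R : {poly algC}) = 1.
  by rewrite -(polyC_natr _ 2) -polyCM mulVf ?polyC1 // pnatr_eq0.
transitivity ((2^-1%:P * 2%:R) * (2^-1%:P * 2%:R) *
   ((2 * (M * n))%:R * ('X^(n * M.-1) * 'X^(n.-1)) : {poly algC})).
  by rewrite !natrM; ring.
by rewrite half2 !mul1r -exprD; congr (_ * 'X^_); nia.
Qed.

Definition agree_opp (m : nat) (a b : seq algC) :=
  (forall i, (i < m)%N -> a`_i = b`_i) /\ (forall i, (m <= i)%N -> a`_i = - b`_i).

Lemma agree_opp_turyn a b c d n m : (0 < n)%N ->
  size a = n -> size b = n -> size c = (2 * m)%N -> size d = (2 * m)%N ->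
  agree_opp m c d -> agree_opp (m * n) (turyn (a, b) (c, d)).1 (turyn (a, b) (c, d)).2.
Proof.
move=> n_gt0 sa sb sc sd [cd_lo cd_hi].
have [se sf] := size_turyn sa sb sc sd.
have nthT := nth_turyn sa sb sc sd n_gt0.
split=> i le_i.
  have lt_i : (i < 2 * m * n)%N by nia.
  have lt_in_m : (i %/ n < m)%N by rewrite ltn_divLR.
  by have [-> ->] := nthT i lt_i; rewrite cd_lo // cd_hi; [ring | lia].
have [lt_i|le_2mn_i] := ltnP i (2 * m * n); last first.
  by rewrite !nth_default ?se ?sf ?oppr0.
have le_m_in : (m <= i %/ n)%N by rewrite leq_divRL.
have lt_in_2m : (i %/ n < 2 * m)%N by rewrite ltn_divLR.
by have [-> ->] := nthT i lt_i; rewrite cd_hi // cd_lo; [ring | lia].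
Qed.

Definition intseq (s : seq int) : seq algC := [seq z%:~R | z <- s].

Lemma nth_intseq (s : seq int) i : (intseq s)`_i = (s`_i)%:~R.
Proof.
have [lt_is|le_si] := ltnP i (size s); first by rewrite (nth_map 0).
by rewrite !nth_default ?size_map.
Qed.

(* A foldr rather than a big sum, so that vm_compute can evaluate it. *)
Definition conv_int (u v : seq int) (k : nat) : int :=
  foldr (fun j acc => u`_j * v`_(k - j) + acc) 0 (iota 0 k.+1).

Lemma conv_intE (u v : seq int) k :
  conv_int u v k = \sum_(j < k.+1) u`_j * v`_(k - j).
Proof.
rewrite -(big_mkord xpredT (fun j => u`_j * v`_(k - j))) /conv_int /index_iota subn0.
by elim: (iota 0 k.+1) => [|j r IH]; rewrite ?big_nil // big_cons -IH.
Qed.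

Definition golay_check (u v : seq int) (n : nat) : bool :=
  all (fun k => conv_int u (rev u) k + conv_int v (rev v) k ==
                (if k == n.-1 then (2 * n)%:Z else 0)) (iota 0 (2 * n)).

Lemma golay_check_poly (u v : seq int) n : size u = n -> size v = n ->
  golay_check u v n ->
  Poly (intseq u) * Poly (rev (intseq u)) + Poly (intseq v) * Poly (rev (intseq v))
  = (2 * n)%:R * 'X^(n.-1).
Proof.
move=> su sv /allP chk; apply/polyP => k.
rewrite mulr_natl coefMn coefXn coefD !coefM.
have [lt_k_2n|le_2n_k] := ltnP k (2 * n).
  have /eqP conv_k := chk k ltac:(by rewrite mem_iota).
  under eq_bigr do rewrite !coef_Poly -map_rev !nth_intseq -rmorphM.
  under [X in _ + X = _]eq_bigr do rewrite !coef_Poly -map_rev !nth_intseq -rmorphM.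
  rewrite -!rmorph_sum -!conv_intE -rmorphD conv_k.
  by case: (k == n.-1); rewrite ?mulr1n ?mul0rn.
have high_zero (w : seq int) : size w = n ->
    \sum_(j < k.+1) (Poly (intseq w))`_j * (Poly (rev (intseq w)))`_(k - j) = 0.
  move=> sw; apply: big1 => j _; rewrite !coef_Poly.
  have [lt_jn|le_nj] := ltnP j n; last by rewrite nth_default ?mul0r ?size_map ?sw.
  by rewrite [X in _ * X]nth_default ?mulr0 // size_rev size_map sw; lia.
rewrite !high_zero // add0r; case: eqP => [kE|]; last by rewrite mul0rn.
by rewrite kE in le_2n_k; rewrite (_ : n = 0)%N ?muln0 //; lia.
Qed.

Lemma real_seq_intseq (s : seq int) : real_seq (intseq s).
Proof. by move=> i; rewrite nth_intseq; exact: conj_intr. Qed.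

Lemma golay_pm (s1 s2 : seq bool) n : size s1 = n -> size s2 = n ->
  golay_check [seq if x then 1 else -1 | x <- s1] [seq if x then 1 else -1 | x <- s2] n ->
  golay (pm s1) (pm s2) n.
Proof.
have pmE s : pm s = intseq [seq if x then 1 else -1 | x <- s].
  by rewrite /intseq -map_comp; apply: eq_map => -[]; rewrite /= ?rmorphN rmorph1.
move=> s1n s2n chk; rewrite !pmE.
split; rewrite ?size_map //; try exact: real_seq_intseq.
by apply: golay_check_poly; rewrite ?size_map.
Qed.

Definition kernel_len (k : kernel) : nat :=
  match k with Ker2 => 2 | Ker10 => 10 | Ker26 => 26 end.

Lemma kernel_len_gt0 k : (0 < kernel_len k)%N.
Proof. by case: k. Qed.

Lemma golay_kernel k : golay (kernel_pair k).1 (kernel_pair k).2 (kernel_len k).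
Proof. by case: k; apply: golay_pm => //; vm_compute. Qed.

Definition golay_agree_opp (m : nat) (P : seq algC * seq algC) :=
  golay P.1 P.2 (2 * m) /\ agree_opp m P.1 P.2.

Lemma golay_agree_opp_turyn k m P : (0 < m)%N -> golay_agree_opp m P ->
  golay_agree_opp (m * kernel_len k) (turyn (kernel_pair k) P).
Proof.
have len_gt0 := kernel_len_gt0 k.
case: P => c d m_gt0 [gcd acd]; case: (kernel_pair k) (golay_kernel k) => a b gab.
have [sa sb _ _ _] := gab; have [sc sd _ _ _] := gcd.
split; last exact: agree_opp_turyn.
by rewrite mulnA; apply: golay_turyn; rewrite ?muln_gt0.
Qed.

Lemma golay_agree_opp_foldl ks m P : (0 < m)%N -> golay_agree_opp m P ->
  golay_agree_opp (m * \prod_(k <- ks) kernel_len k)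
    (foldl (fun P k => turyn (kernel_pair k) P) P ks).
Proof.
elim: ks m P => [|k ks IH] m P m_gt0 gP /=; first by rewrite big_nil muln1.
rewrite big_cons mulnA; apply: IH; last exact: golay_agree_opp_turyn.
by rewrite muln_gt0 m_gt0 kernel_len_gt0.
Qed.

Lemma golay_agree_opp_K2 : golay_agree_opp 1 K2.
Proof.
split; first exact: (golay_kernel Ker2).
by split=> -[|[|i]] //= _; rewrite ?opprK // !nth_nil oppr0.
Qed.

Lemma golay_agree_opp_turyn_rec ks :
  golay_agree_opp (\prod_(k <- ks) kernel_len k) (turyn_rec ks).
Proof.
rewrite -[X in golay_agree_opp X]mul1n.
exact: golay_agree_opp_foldl golay_agree_opp_K2.
Qed.

Lemma prod_kernel_len ks : \prod_(k <- ks) kernel_len k =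
  (2 ^ count (kernel_eqb Ker2) ks * 10 ^ count (kernel_eqb Ker10) ks
     * 26 ^ count (kernel_eqb Ker26) ks)%N.
Proof.
elim: ks => [|k ks IH]; first by rewrite big_nil.
by rewrite big_cons IH; case: k => /=; rewrite ?add0n ?add1n !expnS; ring.
Qed.

Definition conj_rev_poly (s : seq algC) : {poly algC} := Poly (rev (map Num.conj_op s)).

Lemma rho_coef (u v : seq algC) t : size u = size v -> (t < size u)%N ->
  rho u v (Posz t) = (Poly u * conj_rev_poly v)`_((size u).-1 - t).
Proof.
move=> uvE lt_tu; rewrite /rho /conj_rev_poly coefM.
have -> : ((size u).-1 - t).+1 = (size u - t)%N by lia.
apply: eq_bigr => j _; have lt_j := ltn_ord j.
rewrite !coef_Poly nth_rev ?size_map -?uvE; last by lia.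
by rewrite (nth_map 0) -?uvE; [congr (_ * _^*); congr nth | ]; lia.
Qed.

Lemma rho_neg (u v : seq algC) k : size u = size v ->
  rho u v (Negz k) = (rho v u (Posz k.+1))^*.
Proof.
move=> uvE; rewrite /rho rmorph_sum uvE; apply: eq_bigr => j _.
by rewrite rmorphM /= conjCK mulrC.
Qed.

Lemma CZCP_coef N Z g h : (Z < N)%N -> size g = N -> size h = N ->
  (forall i, (i < Z)%N || (N.-1 - Z <= i < N.-1)%N ->
     (Poly g * conj_rev_poly g + Poly h * conj_rev_poly h)`_i = 0) ->
  (forall i, (i < Z)%N ->
     (Poly g * conj_rev_poly h + Poly h * conj_rev_poly g)`_i = 0) ->
  CZCP N Z g h.
Proof.
move=> lt_ZN sg sh auto0 cross0.
have auto_pos t : ((1 <= t <= Z) || (N - Z <= t <= N - 1))%N ->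
    acorr g (Posz t) + acorr h (Posz t) = 0.
  by move=> t_range; rewrite /acorr !rho_coef ?sg ?sh -?coefD ?auto0 //; lia.
have cross_pos t : (N - Z <= t <= N - 1)%N -> rho g h (Posz t) + rho h g (Posz t) = 0.
  by move=> t_range; rewrite !rho_coef ?sg ?sh -?coefD ?cross0 //; lia.
split=> // -[t|k] t_range.
- exact: auto_pos.
- by rewrite /acorr !rho_neg // -rmorphD auto_pos ?rmorph0.
- exact: cross_pos.
- by rewrite !rho_neg ?sg ?sh // addrC -rmorphD cross_pos ?rmorph0.
Qed.

Lemma Poly_cons_rcons x (s : seq algC) y :
  Poly (x :: rcons s y) = x%:P + 'X * Poly s + 'X^((size s).+1) * y%:P.
Proof. by rewrite /= cons_poly_def -cats1 Poly_cat /= cons_poly_def exprS; ring. Qed.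

Lemma conj_rev_poly_cons_rcons x (s : seq algC) y :
  conj_rev_poly (x :: rcons s y) =
  (y^*)%:P + 'X * conj_rev_poly s + 'X^((size s).+1) * (x^*)%:P.
Proof.
rewrite /conj_rev_poly map_cons map_rcons rev_cons rev_rcons.
by rewrite -[rcons (_ :: _) _]/(_ :: rcons _ _) Poly_cons_rcons size_rev size_map.
Qed.

Section BorderedMates.

Variables (a b : seq algC) (m : nat) (x : algC).
Hypotheses (size_a : size a = (2 * m)%N) (size_b : size b = (2 * m)%N).
Hypotheses (real_a : real_seq a) (real_b : real_seq b).

Local Notation A := (Poly a).
Local Notation B := (Poly b).
Local Notation Ar := (Poly (rev a)).
Local Notation Br := (Poly (rev b)).
Local Notation e := (a ++ rev b).
Local Notation f := (b ++ [seq - z | z <- rev a]).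

Lemma Poly_mate1 : Poly e = A + 'X^(2 * m) * Br.
Proof. by rewrite Poly_cat size_a. Qed.

Lemma Poly_mate2 : Poly f = B - 'X^(2 * m) * Ar.
Proof. by rewrite Poly_cat size_b Poly_opp mulrN. Qed.

Lemma conj_rev_poly_mate1 : conj_rev_poly e = B + 'X^(2 * m) * Ar.
Proof.
rewrite /conj_rev_poly map_cat (real_seq_map_conj real_a).
by rewrite (real_seq_map_conj (real_seq_rev real_b)) rev_cat revK Poly_cat size_b.
Qed.

Lemma conj_rev_poly_mate2 : conj_rev_poly f = - A + 'X^(2 * m) * Br.
Proof.
have opp_real : map Num.conj_op [seq - z | z <- rev a] = [seq - z | z <- rev a].
  rewrite -map_comp (eq_map (g := -%R \o Num.conj_op)) => [|z]; last exact: rmorphN.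
  by rewrite map_comp (real_seq_map_conj (real_seq_rev real_a)).
rewrite /conj_rev_poly map_cat opp_real (real_seq_map_conj real_b) rev_cat -map_rev revK.
by rewrite Poly_cat size_map size_a Poly_opp.
Qed.

Local Notation g := (x :: rcons e (- x^*)).
Local Notation h := (x :: rcons f x^*).

Let size_e : size e = (4 * m)%N.
Proof. by rewrite size_cat size_rev size_a size_b; lia. Qed.

Let size_f : size f = (4 * m)%N.
Proof. by rewrite size_cat size_map size_rev size_a size_b; lia. Qed.

Let bordered_polys :
  [/\ Poly g = x%:P + 'X * (A + 'X^(2 * m) * Br) - 'X^((4 * m).+1) * (x^*)%:P,
      conj_rev_poly g = - x%:P + 'X * (B + 'X^(2 * m) * Ar) + 'X^((4 * m).+1) * (x^*)%:P,
      Poly h = x%:P + 'X * (B - 'X^(2 * m) * Ar) + 'X^((4 * m).+1) * (x^*)%:P &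
      conj_rev_poly h = x%:P + 'X * (- A + 'X^(2 * m) * Br) + 'X^((4 * m).+1) * (x^*)%:P].
Proof.
rewrite !Poly_cons_rcons !conj_rev_poly_cons_rcons size_e size_f Poly_mate1 Poly_mate2.
rewrite conj_rev_poly_mate1 conj_rev_poly_mate2 !polyCN rmorphN /= !conjCK polyCN.
by split; ring.
Qed.

Lemma bordered_auto_poly :
  Poly g * conj_rev_poly g + Poly h * conj_rev_poly h =
    'X^(2 * m + 2) * (2%:R * (A * Ar + B * Br)) + 'X^(4 * m + 1) * (x * x^* *+ 4)%:P
    + 'X * ((x *+ 2)%:P * (B - A)) + 'X^(6 * m + 2) * ((x^* *+ 2)%:P * (Br - Ar)).
Proof.
have [-> -> -> ->] := bordered_polys.
have -> : ((4 * m).+1 = 2 * m + 2 * m + 1)%N by lia.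
have -> : (2 * m + 2 = 2 * m + 1 + 1)%N by lia.
have -> : (4 * m + 1 = 2 * m + 2 * m + 1)%N by lia.
have -> : (6 * m + 2 = 2 * m + 2 * m + 2 * m + 1 + 1)%N by lia.
by rewrite !exprD !expr1 !polyCMn polyCM; ring.
Qed.

Lemma bordered_cross_poly :
  Poly g * conj_rev_poly h + Poly h * conj_rev_poly g =
    'X^(2 * m + 1) * ((x *+ 2)%:P * (Ar + Br)) + 'X^2 * ((B - A) * (B + A))
    + 'X^(4 * m + 2) * ((Br - Ar) * (Br + Ar) + (x^* *+ 2)%:P * (A + B)).
Proof.
have [-> -> -> ->] := bordered_polys.
have -> : ((4 * m).+1 = 2 * m + 2 * m + 1)%N by lia.
have -> : (4 * m + 2 = 2 * m + 2 * m + 1 + 1)%N by lia.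
by rewrite !exprD !expr1 !polyCMn; ring.
Qed.

Hypothesis agree_ab : forall i, (i < m)%N -> a`_i = b`_i.

Lemma coef_diff_mate j : ((j < m) || (2 * m <= j))%N -> (B - A)`_j = 0.
Proof.
rewrite coefB !coef_Poly; case/orP => [lt_jm | le_2m_j]; first by rewrite agree_ab ?subrr.
by rewrite !nth_default ?size_a ?size_b ?subrr.
Qed.

Lemma coef_bordered_cross i : (i <= m)%N ->
  (Poly g * conj_rev_poly h + Poly h * conj_rev_poly g)`_i = 0.
Proof.
move=> le_im; rewrite bordered_cross_poly !coefD !coefXnM.
have [-> ->] : (i < 2 * m + 1)%N /\ (i < 4 * m + 2)%N by lia.
rewrite add0r addr0; case: ltnP => // _; rewrite coefM big1 // => j _.
by rewrite coef_diff_mate ?mul0r //; have := ltn_ord j; lia.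
Qed.

Hypothesis golay_ab : A * Ar + B * Br = (2 * (2 * m))%:R * 'X^((2 * m).-1).

Lemma coef_bordered_auto i : ((i <= m) || (2 * m < i <= 4 * m))%N ->
  (Poly g * conj_rev_poly g + Poly h * conj_rev_poly h)`_i = 0.
Proof.
move=> i_range; rewrite bordered_auto_poly golay_ab !coefD !coefXnM.
have [-> ->] : (i < 4 * m + 1)%N /\ (i < 6 * m + 2)%N by lia.
have diff_term : ('X * ((x *+ 2)%:P * (B - A)))`_i = 0.
  rewrite coefXM; case: eqP => // i_neq0.
  by rewrite coefCM coef_diff_mate ?mulr0 //; lia.
rewrite diff_term !addr0; case: ltnP => // le_i.
rewrite mulrA -natrM mulr_natl coefMn coefXn.
have /negbTE -> : (i - (2 * m + 2) != (2 * m).-1)%N by apply/eqP; lia.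
exact: mul0rn.
Qed.

Lemma bordered_CZCP : CZCP (2 * (2 * m) + 2) (m + 1) g h.
Proof.
apply: CZCP_coef => [||| i i_range | i lt_i].
- lia.
- by rewrite /= size_rcons size_e; lia.
- by rewrite /= size_rcons size_f; lia.
- by apply: coef_bordered_auto; lia.
- by apply: coef_bordered_cross; lia.
Qed.

End BorderedMates.

Unset Implicit Arguments.

Theorem theorem2 (q alpha beta gamma : nat) (ks : seq kernel)
  (x0 y0 x1 y1 : algC) :
  (2 <= q)%N -> (1 <= alpha)%N ->
  (count (kernel_eqb Ker2) ks).+1 = alpha ->
  count (kernel_eqb Ker10) ks = beta ->
  count (kernel_eqb Ker26) ks = gamma ->
  in_Uq q x0 -> in_Uq q y0 -> in_Uq q x1 -> in_Uq q y1 ->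
  x0 - y1^* = 0 -> x1 + y0^* = 0 -> x0 = x1 -> y0^* = - y1^* ->
  let N := (2 ^ alpha * 10 ^ beta * 26 ^ gamma)%N in
  let a := (turyn_rec ks).1 in
  let b := (turyn_rec ks).2 in
  let c := rev b in
  let d := [seq - x | x <- rev a] in
  let e := a ++ c in
  let f := b ++ d in
  let g := x0 :: rcons e y0 in
  let h := x1 :: rcons f y1 in
  CZCP (2 * N + 2) (N %/ 2 + 1) g h.
Proof.
(* Neither q nor membership in U_q plays a role. *)
move=> _ _ count2 count10 count26 _ _ _ _ x0_y1 x1_y0 x0_x1 _ N a b c d e f g h.
have [[sa sb ra rb gab] [agree_ab _]] := golay_agree_opp_turyn_rec ks.
have N_2m : N = (2 * \prod_(k <- ks) kernel_len k)%N.
  by rewrite /N prod_kernel_len -count2 -count10 -count26 expnS !mulnA.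
have y1E : y1 = x0^* by move/subr0_eq: x0_y1 => ->; rewrite conjCK.
have y0E : y0 = - x0^*.
  have : y0^* = - x0 by rewrite x0_x1; apply/eqP; rewrite -addr_eq0 addrC x1_y0.
  by move/(congr1 Num.conj_op); rewrite conjCK rmorphN.
rewrite /g /h /e /f /c /d y1E y0E -x0_x1 N_2m mulKn //.
exact: bordered_CZCP.
Qed.
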